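(* Let $T$ be a linear operator in $H$ and $V\subset\operatorname{dom}(T)$ a finite-dimensional subspace. Then for given $\lambda\in W_{e1}(T)$ and $\varepsilon>0$ there exist $x\in V^\perp\cap\operatorname{dom}(T)$ with $\|x\|=1$ and $\mu\in\mathbb C$ with $|\mu-\lambda|<\varepsilon$ such that \[ T_{V_x}=\begin{pmatrix}T_V&A\\0&\mu I\end{pmatrix}\quad\text{in } V_x:=V\oplus\operatorname{span}\{x\} \] for some linear operator $A:\operatorname{span}\{x\}\to V$; consequently $\sigma(T_{V_x})=\sigma(T_V)\cup\{\mu\}$. Moreover, one can choose $A=0$ if $\overline{\operatorname{dom}(T)}=H$ and $\operatorname{dom}(T)\subset\operatorname{dom}(T^* )$, and one can choose $\mu=\lambda$ if $\lambda\in\operatorname{int}W_{e1}(T)$.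
   Context: $H$ is a separable infinite-dimensional complex Hilbert space. $W(S)=\{\langle Sx,x\rangle:x\in\operatorname{dom}(S),\|x\|=1\}$. $W_{e1}(T):=\bigcap_{U}\overline{W(T|_{U^\perp\cap\operatorname{dom}(T)})}$, the intersection over all finite-dimensional subspaces $U\subset H$, where $T|_M$ denotes restriction to $M$. For a closed subspace $W\subset\operatorname{dom}(T)$, $P_W$ is the orthogonal projection onto $W$ and $T_W:=P_WT|_W$ is the compression of $T$ to $W$. *)

From HB Require Import structures.
From mathcomp Require Import all_boot all_order all_algebra.
From mathcomp Require Import all_classical all_reals all_analysis.
From mathcomp Require Import complex.
Import Order.TTheory GRing.Theory Num.Theory.
Import numFieldTopology.Exports numFieldNormedType.Exports.

Set Implicit Arguments.
Unset Strict Implicit.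
Unset Printing Implicit Defensive.

Local Open Scope ring_scope.
Local Open Scope classical_set_scope.

Section Hilbert.
Variables (R : realType) (H : lmodType (complex R)).
Variable ip : H -> H -> complex R.   (* inner product, linear in 1st argument *)

Definition hnorm (x : H) : complex R := sqrtC (ip x x).

Definition fspan (s : seq H) : set H :=
  [set y | exists c : 'I_(size s) -> complex R,
           y = \sum_(i < size s) c i *: nth 0 s i].

Record sep_inf_Hilbert : Prop := {
  ipDl : forall (a : complex R) (x y z : H),
           ip (a *: x + y) z = a * ip x z + ip y z;
  ip_conj : forall x y : H, ip y x = (ip x y)^*;
  ip_ge0 : forall x : H, 0 <= ip x x;
  ip_eq0 : forall x : H, ip x x = 0 -> x = 0;
  ip_complete : forall u : nat -> H,
     (forall e : complex R, 0 < e -> exists N : nat, forall m n : nat,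
         (N <= m)%N -> (N <= n)%N -> hnorm (u m - u n) < e) ->
     exists l : H, forall e : complex R, 0 < e ->
         exists N : nat, forall n : nat, (N <= n)%N -> hnorm (u n - l) < e;
  ip_separable : exists d : nat -> H, forall (y : H) (e : complex R), 0 < e ->
     exists n : nat, hnorm (y - d n) < e;
  ip_infdim : forall s : seq H, exists y : H, ~ fspan s y
}.

Definition linop (dom : set H) (T : H -> H) : Prop :=
  dom 0 /\ forall (a : complex R) (x y : H), dom x -> dom y ->
    dom (a *: x + y) /\ T (a *: x + y) = a *: T x + T y.

Definition findim_subspace (V : set H) : Prop := exists s : seq H, V = fspan s.

Definition orth (V : set H) : set H := [set y | forall v, V v -> ip y v = 0].

Definition numrange (D : set H) (T : H -> H) : set (complex R) :=
  [set ip (T x) x | x in [set x | D x /\ hnorm x = 1]].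

Definition We1 (dom : set H) (T : H -> H) : set (complex R) :=
  \bigcap_(U in findim_subspace)
     closure (numrange (orth U `&` dom) T : set (complex R)^o).

(* orthogonal projection onto W (W closed subspace: here finite-dimensional) *)
Definition proj (W : set H) (y : H) : H :=
  xget 0 [set w | W w /\ forall u, W u -> ip (y - w) u = 0].

Definition compress (W : set H) (T : H -> H) : H -> H := fun w => proj W (T w).

Definition spectrum (W : set H) (S : H -> H) : set (complex R) :=
  [set z | ~ (forall y, W y -> exists! w, W w /\ S w - z *: w = y)].

Definition addline (V : set H) (x : H) : set H :=
  [set y | exists v (c : complex R), V v /\ y = v + c *: x].

(* T_{V_x} = [[T_V, A],[0, mu I]] w.r.t. V_x = V (+) span{x},
   with A : span{x} -> V linear *)
Definition block_form (V : set H) (x : H) (T : H -> H) (mu : complex R)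
    (A : H -> H) : Prop :=
  (forall c : complex R, A (c *: x) = c *: A x) /\ V (A x) /\
  forall (v : H) (c : complex R), V v ->
    compress (addline V x) T (v + c *: x)
      = compress V T v + A (c *: x) + (c * mu) *: x.

Definition dense_dom (dom : set H) : Prop :=
  forall (y : H) (e : complex R), 0 < e -> exists x, dom x /\ hnorm (y - x) < e.

Definition adj_dom (dom : set H) (T : H -> H) : set H :=
  [set y | exists z, forall x, dom x -> ip (T x) y = ip x z].

Definition lemma6p6_choice (dom : set H) (T : H -> H) (V : set H)
    (lam eps : complex R) (x : H) (mu : complex R) (A : H -> H) : Prop :=
  [/\ orth V x /\ dom x, hnorm x = 1, `|mu - lam| < eps,
      block_form V x T mu A &
      spectrum (addline V x) (compress (addline V x) T)
        = spectrum V (compress V T) `|` [set mu]].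

End Hilbert.

From Pilot Require Import Defs.
From HB Require Import structures.
From mathcomp Require Import all_boot all_order all_algebra.
From mathcomp Require Import all_classical all_reals all_analysis.
From mathcomp Require Import complex.
From mathcomp Require Import ring lra.
Import Order.TTheory GRing.Theory Num.Theory.
Import numFieldTopology.Exports numFieldNormedType.Exports.
Local Open Scope ring_scope.
Local Open Scope classical_set_scope.
Set Implicit Arguments.
Unset Strict Implicit.

(* Pick a unit vector x orthogonal to V and to T V with <Tx, x> close to lam:
   lam lies in the closure of the numerical range of T on (V + T V)^perp.
   Because x is orthogonal to T V, the compression of T to V + span{x} is
   upper block triangular with corner mu = <Tx, x> and off-diagonal part
   A x = P_V T x, and the spectrum of a block triangular operator is
   sigma(T_V) together with mu. When dom T lies in dom T^*, choosing x also
   orthogonal to T^* V makes P_V T x = 0. When lam is interior to W_e1(T), it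
   is interior to the closure of the numerical range above, which is convex
   (Toeplitz-Hausdorff), hence lam belongs to that range and mu = lam. *)

Section RealQuadratic.
Variable C : numClosedFieldType.

Lemma real_quadratic_root (p k q : C) : 0 <= p -> 0 < q -> k \is Num.real ->
  exists2 s, s \is Num.real & p + k * s - q * s ^+ 2 = 0.
Proof.
move=> p_ge0 q_gt0 k_real.
set D := k ^+ 2 + 4 * p * q; set r := sqrtC D.
have r_real : r \is Num.real.
  rewrite ger0_real // sqrtC_ge0 addr_ge0 ?real_exprn_even_ge0 //.
  by rewrite !mulr_ge0 ?ler0n // ltW.
exists ((k + r) / (2 * q)).
  by rewrite rpredM ?rpredV ?rpredD // rpredM ?rpred_nat // gtr0_real.
have q_neq0 : q != 0 by rewrite gt_eqF.
transitivity ((D - r ^+ 2) / (4 * q)).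
  by rewrite /D; field.
by rewrite /r sqrtCK subrr mul0r.
Qed.

Lemma exists_conj_comb_real (b g : C) :
  exists2 w, w != 0 & w * b + w^* * g \is Num.real.
Proof.
have [->|bg] := eqVneq b g^*.
  by exists 1; rewrite ?oner_eq0 // conjC1 !mul1r CrealE rmorphD /= conjCK addrC.
exists (b^* - g); first by rewrite subr_eq0; apply: contra_neq bg => <-; rewrite conjCK.
by rewrite CrealE rmorphD !rmorphM !rmorphB /= !conjCK; apply/eqP; ring.
Qed.

End RealQuadratic.

Section ConvexPlane.
Variable R : rcfType.
Local Open Scope complex_scope.

Definition convexC (W : set R[i]) :=
  forall a b (t : R), W a -> W b -> 0 < t < 1 -> W (a + t%:C * (b - a)).

Lemma convexC_complexE (a1 a2 b1 b2 t : R) :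
  (a1 +i* a2) + t%:C * ((b1 +i* b2) - (a1 +i* a2)) =
  (a1 + t * (b1 - a1)) +i* (a2 + t * (b2 - a2)).
Proof. by simpc. Qed.

Lemma between_ratio (x a y : R) : x < a < y ->
  exists2 t, 0 < t < 1 & x + t * (y - x) = a.
Proof.
move=> /andP [xa ay]; have yx_gt0 : 0 < y - x by rewrite subr_gt0 (lt_trans xa).
exists ((a - x) / (y - x)); last by rewrite divfK ?gt_eqF // addrC subrK.
apply/andP; split; first by rewrite divr_gt0 // subr_gt0.
by rewrite ltr_pdivrMr // mul1r ltrD2r.
Qed.

Lemma normc_coord_lt (a b e : R) : `|a +i* b| < e%:C -> `|a| < e /\ `|b| < e.
Proof.
rewrite normc_def ltcR /= => lt_e.
by split; apply: le_lt_trans lt_e; rewrite -sqrtr_sqr ler_wsqrtr // ?lerDl ?lerDr sqr_ge0.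
Qed.

Lemma convexC_square W (x y rho : R) : convexC W -> 0 < rho ->
  (forall u v : R, `|u| = rho -> `|v| = rho ->
     exists2 w, W w & `|(x + u) +i* (y + v) - w| < (rho / 2)%:C) ->
  W (x +i* y).
Proof.
(* Segments joining points of W near the two upper (lower) corners cross the
   vertical line through x + iy above (below) it. *)
move=> convW rho_gt0 near_corner.
have corner u v : `|u| = rho -> `|v| = rho -> exists a b, W (a +i* b) /\
    `|x + u - a| < rho / 2 /\ `|y + v - b| < rho / 2.
  move=> /near_corner /[apply] -[[a b] Wab /normc_coord_lt].
  by simpc; exists a, b.
have rhoE : `|rho| = rho by rewrite gtr0_norm.
have rhoNE : `|- rho| = rho by rewrite normrN.
have [a1 [b1 [W1 [+ +]]]] := corner _ _ rhoE rhoE.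
have [a2 [b2 [W2 [+ +]]]] := corner _ _ rhoNE rhoE.
have [a3 [b3 [W3 [+ +]]]] := corner _ _ rhoE rhoNE.
have [a4 [b4 [W4 [+ +]]]] := corner _ _ rhoNE rhoNE.
rewrite !ltr_norml => /andP [? ?] /andP [? ?] /andP [? ?] /andP [? ?].
move=> /andP [? ?] /andP [? ?] /andP [? ?] /andP [? ?].
have [t1 /andP [? ?] e1] := @between_ratio a2 x a1 ltac:(apply/andP; split; lra).
have WU : W (x +i* (b2 + t1 * (b1 - b2))).
  by rewrite -e1 -convexC_complexE; apply: convW => //; apply/andP.
have [t2 /andP [? ?] e2] := @between_ratio a4 x a3 ltac:(apply/andP; split; lra).
have WL : W (x +i* (b4 + t2 * (b3 - b4))).
  by rewrite -e2 -convexC_complexE; apply: convW => //; apply/andP.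
have [t t01 e] := @between_ratio (b4 + t2 * (b3 - b4)) y (b2 + t1 * (b1 - b2))
  ltac:(apply/andP; split; nra).
by have := convW _ _ _ WL WU t01; rewrite convexC_complexE e subrr mulr0 addr0.
Qed.

Lemma convexC_interior_closure W z :
  convexC W -> (closure (W : set R[i]^o))^° z -> W z.
Proof.
move=> convW /nbhs_ballP [[r1 r2] /= + ball_sub].
rewrite ltcE /= => /andP [/eqP r2E r1_gt0]; move: ball_sub; rewrite r2E.
case: z => x y ball_sub.
apply: (@convexC_square _ _ _ (r1 / 2)) => [//||u v nu nv]; first lra.
have u2 : u ^+ 2 = (r1 / 2) ^+ 2 by rewrite -real_normK ?num_real // nu.
have v2 : v ^+ 2 = (r1 / 2) ^+ 2 by rewrite -real_normK ?num_real // nv.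
have /ball_sub : ball (x +i* y : R[i]^o) (r1 +i* 0) ((x + u) +i* (y + v)).
  rewrite /ball /= normc_def -complexr0 ltcR /= -[ltRHS]gtr0_norm //.
  rewrite -sqrtr_sqr ltr_sqrt ?exprn_gt0 // !opprD !addrA !subrr !add0r !sqrrN u2 v2.
  nra.
have hr : 0 < (r1 / 2 / 2)%:C by rewrite ltcR; lra.
by move=> /(_ _ (nbhsx_ballx _ _ hr)) [w [Ww bw]]; exists w.
Qed.

End ConvexPlane.

Section InnerProduct.
Variables (R : realType) (H : lmodType R[i]) (ip : H -> H -> R[i]).
Hypothesis ipZDl : forall a x y z, ip (a *: x + y) z = a * ip x z + ip y z.
Hypothesis ip_conj : forall x y, ip y x = (ip x y)^*.
Hypothesis ip_eq0 : forall x, ip x x = 0 -> x = 0.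
Hypothesis ip_ge0 : forall x, 0 <= ip x x.
Local Notation fspan := (@fspan R H).
Local Notation addline := (@addline R H).

Lemma ip0l z : ip 0 z = 0.
Proof.
have := ipZDl 1 0 0 z; rewrite scaler0 addr0 mul1r => ip0_twice.
by apply/esym/(addrI (ip 0 z)); rewrite addr0.
Qed.

Lemma ipDl x y z : ip (x + y) z = ip x z + ip y z.
Proof. by rewrite -{1}[x]scale1r ipZDl mul1r. Qed.

Lemma ipZl a x z : ip (a *: x) z = a * ip x z.
Proof. by rewrite -[a *: x]addr0 ipZDl ip0l addr0. Qed.

Lemma ipBl x y z : ip (x - y) z = ip x z - ip y z.
Proof. by rewrite ipDl -scaleN1r ipZl mulN1r. Qed.

Lemma ipDr z x y : ip z (x + y) = ip z x + ip z y.
Proof. by rewrite ip_conj ipDl rmorphD /= -!ip_conj. Qed.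

Lemma ipZr z a x : ip z (a *: x) = a^* * ip z x.
Proof. by rewrite ip_conj ipZl rmorphM /= -ip_conj. Qed.

Lemma ip_sym_eq0 x y : ip x y = 0 -> ip y x = 0.
Proof. by move=> xy0; rewrite ip_conj xy0 conjC0. Qed.

Lemma ip0r z : ip z 0 = 0.
Proof. by apply: ip_sym_eq0; apply: ip0l. Qed.

Lemma hnorm_eq1 x : hnorm ip x = 1 <-> ip x x = 1.
Proof.
by rewrite /hnorm; split=> [h|->]; [rewrite -[ip x x]sqrtCK h expr1n | apply: sqrtC1].
Qed.

Definition subspace (W : set H) := W 0 /\ forall a u v, W u -> W v -> W (a *: u + v).

Lemma subspaceZ W a u : subspace W -> W u -> W (a *: u).
Proof. by case=> W0 WZD Wu; rewrite -[_ *: _]addr0; apply: WZD. Qed.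

Lemma subspaceD W u v : subspace W -> W u -> W v -> W (u + v).
Proof. by case=> _ WZD Wu Wv; rewrite -[u]scale1r; apply: WZD. Qed.

Lemma subspaceB W u v : subspace W -> W u -> W v -> W (u - v).
Proof. by move=> sW Wu Wv; rewrite -scaleN1r; apply: subspaceD => //; apply: subspaceZ. Qed.

Lemma subspaceI U W : subspace U -> subspace W -> subspace (U `&` W).
Proof.
move=> [U0 UZD] [W0 WZD]; split=> // a u v [Uu Wu] [Uv Wv].
by split; [apply: UZD | apply: WZD].
Qed.

Lemma fspan_subspace s : subspace (fspan s).
Proof.
split; first by exists (fun=> 0); rewrite big1 // => i _; rewrite scale0r.
move=> a _ _ [cu ->] [cv ->]; exists (fun i => a * cu i + cv i).
by rewrite scaler_sumr -big_split; apply: eq_bigr => i _; rewrite scalerDl scalerA.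
Qed.

Lemma fspan_mem s v : v \in s -> fspan s v.
Proof.
move=> sv; have vi : (index v s < size s)%N by rewrite index_mem.
exists (fun j => (j == Ordinal vi)%:R); rewrite (bigD1 (Ordinal vi)) //= eqxx.
by rewrite scale1r nth_index // big1 ?addr0 // => j /negbTE ->; rewrite scale0r.
Qed.

Lemma fspan_min s W : subspace W -> (forall v, v \in s -> W v) -> fspan s `<=` W.
Proof.
move=> sW sWs _ [c ->]; apply: (big_ind W); first by case: sW.
  by move=> u v; apply: subspaceD.
by move=> i _; apply: subspaceZ => //; apply/sWs/mem_nth.
Qed.

Lemma orth_subspace U : subspace (orth ip U).
Proof.
split=> [v _|a u w uU wU v Uv]; first exact: ip0l.
by rewrite ipZDl uU // wU // mulr0 addr0.
Qed.

Lemma orth_fspan s y : (forall v, v \in s -> ip y v = 0) -> orth ip (fspan s) y.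
Proof.
move=> ys v /(fspan_min (orth_subspace [set y])) yv; apply/ip_sym_eq0/yv => //.
by move=> u /ys /ip_sym_eq0 uy _ ->.
Qed.

Lemma addline_mem V x v c : V v -> addline V x (v + c *: x).
Proof. by move=> Vv; exists v, c. Qed.

Lemma addline_subspace V x : subspace V -> subspace (addline V x).
Proof.
move=> sV; split; first by rewrite -[0]addr0 -{2}(scale0r x); apply: addline_mem; case: sV.
move=> a _ _ [u [c [Vu ->]]] [v [d [Vv ->]]].
rewrite scalerDr scalerA addrACA -scalerDl.
by apply: addline_mem; case: sV => _; apply.
Qed.

Lemma addline_shift V x y : subspace V -> V (x - y) -> addline V x = addline V y.
Proof.
move=> sV Vxy; apply/seteqP; split=> _ [v [c [Vv ->]]].
  rewrite -[x](subrK y) scalerDr addrA.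
  by apply: addline_mem; apply: subspaceD => //; apply: subspaceZ.
have -> : v + c *: y = v - c *: (x - y) + c *: x.
  by rewrite scalerBr opprB addrA subrK.
by apply: addline_mem; apply: subspaceB => //; apply: subspaceZ.
Qed.

Lemma addline0 V : subspace V -> addline V 0 = V.
Proof.
move=> sV; apply/seteqP; split=> [_ [v [c [Vv ->]]]|v Vv].
  by rewrite scaler0 addr0.
by have := addline_mem 0 0 Vv; rewrite scale0r addr0.
Qed.

Lemma fspan_cons a s : fspan (a :: s) = addline (fspan s) a.
Proof.
apply/seteqP; split=> [_ [c ->]|_ [_ [k [[c ->] ->]]]].
  rewrite big_ord_recl /= addrC; apply: addline_mem.
  by exists (fun i => c (lift ord0 i)).
exists (fun i : 'I_(size s).+1 => if unlift ord0 i is Some j then c j else k).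
rewrite big_ord_recl /= unlift_none addrC; congr (_ + _).
by apply: eq_bigr => i _; rewrite liftK.
Qed.

Definition is_proj (W : set H) (y w : H) := W w /\ orth ip W (y - w).

Lemma is_proj_uniq W y w1 w2 :
  subspace W -> is_proj W y w1 -> is_proj W y w2 -> w1 = w2.
Proof.
move=> sW [Ww1 y_w1] [Ww2 y_w2]; have W12 : W (w1 - w2) by apply: subspaceB.
apply/eqP; rewrite -subr_eq0; apply/eqP/ip_eq0.
have e : w1 - w2 = (y - w2) - (y - w1) by rewrite [RHS]addrC opprB addrA subrK.
by rewrite {1}e ipBl y_w1 // y_w2 // subrr.
Qed.

Lemma projE W y w : subspace W -> is_proj W y w -> Defs.proj ip W y = w.
Proof.
by move=> sW yw; apply: xget_unique => // w' yw'; apply: is_proj_uniq yw' yw.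
Qed.

Lemma is_projZD W a y1 y2 w1 w2 : subspace W ->
  is_proj W y1 w1 -> is_proj W y2 w2 -> is_proj W (a *: y1 + y2) (a *: w1 + w2).
Proof.
move=> sW [Ww1 y_w1] [Ww2 y_w2]; split; first by case: sW => _; apply.
by move=> u Wu; rewrite opprD addrACA -scalerBr ipZDl y_w1 // y_w2 // mulr0 addr0.
Qed.

Lemma is_proj_orth W y : subspace W -> orth ip W y -> is_proj W y 0.
Proof. by case=> W0 _ yW; split; rewrite ?subr0. Qed.

Lemma is_proj_addline V x y w : subspace V -> ip x x != 0 -> orth ip V x ->
  is_proj V y w -> is_proj (addline V x) y (w + (ip y x / ip x x) *: x).
Proof.
move=> sV xx_neq0 xV [Vw y_w]; split; first exact: addline_mem.
have wx : ip w x = 0 by apply/ip_sym_eq0/xV.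
move=> _ [v [c [Vv ->]]].
rewrite opprD addrA ipBl !ipDr !ipZr y_w // ipBl wx !ipZl (xV _ Vv).
by rewrite divfK // mulr0 !add0r subr0 subrr.
Qed.

Lemma is_proj_fspan s y : is_proj (fspan s) y (Defs.proj ip (fspan s) y).
Proof.
suff [w yw] : exists w, is_proj (fspan s) y w.
  by rewrite (projE (fspan_subspace s) yw).
elim: s y => [|a s IH] y.
  exists 0; split; first by case: (fspan_subspace [::]).
  by move=> _ [c ->]; rewrite big_ord0 ip0r.
have sV := fspan_subspace s; have [pa [Vpa a_pa]] := IH a; have [w yw] := IH y.
(* Gram-Schmidt step: adjoining a to s adds the line through a - pa. *)
rewrite fspan_cons (@addline_shift _ _ (a - pa)) //; last by rewrite opprB addrC subrK.
have [->|a'_neq0] := eqVneq (a - pa) 0; first by rewrite addline0 //; exists w.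
eexists; apply: (is_proj_addline sV _ a_pa yw).
by apply: contra_neq a'_neq0 => /ip_eq0.
Qed.

Lemma addline_decomp_inj V x v1 v2 c1 c2 : ip x x = 1 -> orth ip V x ->
  V v1 -> V v2 -> v1 + c1 *: x = v2 + c2 *: x -> v1 = v2 /\ c1 = c2.
Proof.
move=> xx1 xV Vv1 Vv2 e; suff c12 : c1 = c2 by split=> //; move: e; rewrite c12 => /addIr.
have := congr1 (ip^~ x) e; rewrite /= !ipDl !ipZl xx1 !mulr1.
by rewrite !(ip_sym_eq0 (xV _ _)) // !add0r.
Qed.

(* [spectrum W S] is by definition the complement of [resolvent W S]. *)
Definition resolvent (W : set H) (S : H -> H) (z : R[i]) :=
  forall y, W y -> exists! w, W w /\ S w - z *: w = y.

Section BlockTriangular.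
Variables (V : set H) (x : H) (SV S : H -> H) (Ax : H) (mu : R[i]).
Hypotheses (sV : subspace V) (xx1 : ip x x = 1) (xV : orth ip V x).
Hypotheses (SV_V : forall v, V v -> V (SV v)) (VAx : V Ax).
Hypothesis S_block :
  forall v c, V v -> S (v + c *: x) = SV v + c *: Ax + (c * mu) *: x.

Let S_shift z v c : V v -> S (v + c *: x) - z *: (v + c *: x) =
  (SV v - z *: v + c *: Ax) + (c * (mu - z)) *: x.
Proof.
move=> Vv; rewrite S_block // scalerDr scalerA mulrBr scalerBl (mulrC z c).
by rewrite opprD addrACA (addrAC (SV v)).
Qed.

Let V_shift z v c : V v -> V (SV v - z *: v + c *: Ax).
Proof.
move=> Vv; apply: subspaceD => //; last exact: subspaceZ.
by apply: subspaceB => //; [apply: SV_V | apply: subspaceZ].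
Qed.

Lemma resolvent_block_addline z : z != mu ->
  resolvent V SV z -> resolvent (addline V x) S z.
Proof.
move=> z_neq_mu resV _ [yv [d [Vyv ->]]].
have mu_z_neq0 : mu - z != 0 by rewrite subr_eq0 eq_sym.
set c := d / (mu - z).
have [v [[Vv ev] v_uniq]] : exists! v, V v /\ SV v - z *: v = yv - c *: Ax.
  by apply: resV; apply: subspaceB => //; apply: subspaceZ.
exists (v + c *: x); split.
  by split; [apply: addline_mem | rewrite S_shift // ev subrK divfK].
move=> _ [[v' [c' [Vv' ->]]]]; rewrite S_shift // => e'.
have [ev' ec'] := addline_decomp_inj xx1 xV (V_shift z c' Vv') Vyv e'.
have c'E : c' = c by rewrite /c -ec' mulfK.
suff -> : v' = v by rewrite c'E.
by apply/esym/v_uniq; split=> //; rewrite -ev' c'E addrK.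
Qed.

Lemma resolvent_block_subspace z : z != mu ->
  resolvent (addline V x) S z -> resolvent V SV z.
Proof.
move=> z_neq_mu resVx y Vy.
have mu_z_neq0 : mu - z != 0 by rewrite subr_eq0 eq_sym.
have Vx0 v : V v -> addline V x v.
  by move=> Vv; rewrite -[v]addr0 -(scale0r x); apply: addline_mem.
have [_ [[[v [c [Vv ->]]] ew] w_uniq]] := resVx y (Vx0 y Vy).
move: ew; rewrite S_shift // -[y in _ = y]addr0 -(scale0r x) => ew.
have [ev /eqP] := addline_decomp_inj xx1 xV (V_shift z c Vv) Vy ew.
rewrite mulf_eq0 (negbTE mu_z_neq0) orbF => /eqP c0; subst c.
exists v; split=> [|v' [Vv' ev']]; first by rewrite scale0r addr0 in ev.
have /w_uniq : addline V x (v' + 0 *: x) /\ S (v' + 0 *: x) - z *: (v' + 0 *: x) = y.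
  by split; [apply: addline_mem | rewrite S_shift // ev' !scale0r mul0r scale0r !addr0].
by rewrite !scale0r !addr0.
Qed.

Lemma spectrum_block : spectrum (addline V x) S = spectrum V SV `|` [set mu].
Proof.
have mu_spec : spectrum (addline V x) S mu.
  have Vxx : addline V x x by have := addline_mem x 1 (proj1 sV); rewrite add0r scale1r.
  move=> /(_ x Vxx) [_ [[[v [c [Vv ->]]]]]] /[swap] _.
  rewrite S_shift // subrr mulr0 scale0r addr0 => ex.
  move: xx1; rewrite -{1}ex (ip_sym_eq0 (xV (V_shift mu c Vv))) => /eqP.
  by rewrite eq_sym oner_eq0.
apply/seteqP; split=> z.
  have [->|z_neq_mu] := eqVneq z mu; first by right.
  by move=> z_spec; left=> resV; apply/z_spec/resolvent_block_addline.
case=> [z_spec|-> //]; have [-> //|z_neq_mu] := eqVneq z mu.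
by move=> resVx; apply/z_spec/resolvent_block_subspace.
Qed.

End BlockTriangular.

Lemma fspan_catl s t : fspan s `<=` fspan (s ++ t).
Proof.
by apply: fspan_min (fspan_subspace _) _ => v sv; apply: fspan_mem; rewrite mem_cat sv.
Qed.

Lemma proj_fspanZD s a y1 y2 : Defs.proj ip (fspan s) (a *: y1 + y2) =
  a *: Defs.proj ip (fspan s) y1 + Defs.proj ip (fspan s) y2.
Proof.
have sV := fspan_subspace s.
exact: (projE sV (is_projZD _ sV (is_proj_fspan _ _) (is_proj_fspan _ _))).
Qed.

Lemma proj_addline_fspan s x y : ip x x = 1 -> orth ip (fspan s) x ->
  Defs.proj ip (addline (fspan s) x) y = Defs.proj ip (fspan s) y + ip y x *: x.
Proof.
move=> xx1 xV; rewrite -[ip y x]divr1 -xx1.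
apply: projE; first exact/addline_subspace/fspan_subspace.
apply: is_proj_addline (is_proj_fspan s y) => //; last by rewrite xx1 oner_eq0.
exact: fspan_subspace.
Qed.

Section Operator.
Variables (dom : set H) (T : H -> H).
Hypothesis hT : linop dom T.

Lemma linop_dom_subspace : subspace dom.
Proof. by case: hT => dom0 hZD; split=> // a u v du dv; case: (hZD a u v du dv). Qed.

Lemma linopZD a u v : dom u -> dom v -> T (a *: u + v) = a *: T u + T v.
Proof. by case: hT => _ hZD du dv; case: (hZD a u v du dv). Qed.

Lemma linop0 : T 0 = 0.
Proof.
have dom0 := proj1 hT; have := linopZD 1 dom0 dom0.
by rewrite scaler0 addr0 scale1r => T0_twice; apply/esym/(addrI (T 0)); rewrite addr0.
Qed.

Lemma linopZ a u : dom u -> T (a *: u) = a *: T u.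
Proof.
by move=> du; rewrite -[a *: u]addr0 linopZD ?linop0 ?addr0 //; apply: (proj1 hT).
Qed.

Lemma linop_preimage_subspace W : subspace W -> subspace [set v | dom v /\ W (T v)].
Proof.
move=> sW; have sdom := linop_dom_subspace.
split; first by split; [case: sdom | rewrite linop0; case: sW].
move=> a u v [du Wu] [dv Wv]; split; first by case: sdom => _; apply.
by rewrite linopZD //; case: sW => _; apply.
Qed.

Lemma lemma6p6_choice_orth s x lam eps :
  fspan s `<=` dom -> dom x -> ip x x = 1 -> orth ip (fspan (s ++ map T s)) x ->
  `|ip (T x) x - lam| < eps ->
  lemma6p6_choice ip dom T (fspan s) lam eps x (ip (T x) x)
    (fun h => ip h x *: Defs.proj ip (fspan s) (T x)).
Proof.
move=> Vdom dx xx1 x_orth mu_lam; have sV := fspan_subspace s.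
have xV : orth ip (fspan s) x by move=> v /(@fspan_catl _ (map T s)) /x_orth.
have TV_x v : fspan s v -> ip (T v) x = 0.
  move=> Vv; suff /(_ v Vv) [_ /(_ x erefl)] :
      fspan s `<=` [set v | dom v /\ orth ip [set x] (T v)] by [].
  apply: fspan_min (linop_preimage_subspace (orth_subspace _)) _ => u su.
  split=> [|_ ->]; first exact/Vdom/fspan_mem.
  by apply/ip_sym_eq0/x_orth/fspan_mem; rewrite mem_cat map_f ?orbT.
set PTx := Defs.proj ip (fspan s) (T x).
have S_block v c : fspan s v -> compress ip (addline (fspan s) x) T (v + c *: x) =
    compress ip (fspan s) T v + c *: PTx + (c * ip (T x) x) *: x.
  move=> Vv; have dv := Vdom _ Vv.
  rewrite /compress proj_addline_fspan // (addrC v) linopZD // proj_fspanZD.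
  by rewrite ipZDl (TV_x v Vv) addr0 (addrC (c *: _)).
have [VPTx _] := is_proj_fspan s (T x).
split=> //; first exact/hnorm_eq1.
  split=> [c|]; first by rewrite ipZl xx1 mulr1 scalerA mulr1.
  rewrite xx1 scale1r; split=> [|v c Vv]; first exact: VPTx.
  by rewrite S_block // ipZl xx1 mulr1.
apply: (spectrum_block sV xx1 xV _ VPTx S_block) => v Vv.
by case: (is_proj_fspan s (T v)).
Qed.

Lemma numrange_ratio M z : subspace M -> M `<=` dom -> M z -> z != 0 ->
  numrange ip M T (ip (T z) z / ip z z).
Proof.
move=> sM Mdom Mz z_neq0.
have zz_gt0 : 0 < ip z z.
  by rewrite lt_def ip_ge0 andbT; apply: contra_neq z_neq0; apply: ip_eq0.
set n := sqrtC (ip z z); have n_gt0 : 0 < n by rewrite sqrtC_gt0.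
have nVJ : n^-1^* = n^-1 by rewrite geC0_conj // invr_ge0 ltW.
have nn : n * n = ip z z by rewrite -expr2 sqrtCK.
have n_neq0 : n != 0 by rewrite gt_eqF.
exists (n^-1 *: z); first split; first exact: subspaceZ.
  by apply/hnorm_eq1; rewrite ipZl ipZr nVJ -nn; field.
by rewrite (linopZ _ (Mdom _ Mz)) (ipZl (n^-1)) ipZr nVJ -nn; field.
Qed.

Lemma numrange_convex M : subspace M -> M `<=` dom -> convexC (numrange ip M T).
Proof.
move=> sM Mdom _ _ t [x [Mx /hnorm_eq1 xx1] <-] [y [My /hnorm_eq1 yy1] <-].
move=> /andP [t_gt0 t_lt1]; have [dx dy] := (Mdom _ Mx, Mdom _ My).
(* Look for z = s w x + y with <Tz, z> = c <z, z>: once w is chosen so that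
   the cross terms are real, this is a real quadratic equation in s. *)
set a := ip (T x) x; set b := ip (T y) y.
have [->|ba] := eqVneq b a.
  by rewrite subrr mulr0 addr0; exists x => //; split=> //; apply/hnorm_eq1.
set d := b - a; have d_neq0 : d != 0 by rewrite subr_eq0.
set c := a + t%:C%C * d.
set bet := (ip (T x) y - c * ip x y) / d; set gam := (ip (T y) x - c * ip y x) / d.
have [w w_neq0 k_real] := exists_conj_comb_real bet gam.
have m_gt0 : 0 < t%:C%C * (w * w^*).
  by rewrite mulr_gt0 ?ltcR // -normCK exprn_gt0 ?normr_gt0.
have p_ge0 : 0 <= 1 - t%:C%C.
  by rewrite -(rmorph1 (real_complex R)) -rmorphB lecR subr_ge0 ltW.
have [s s_real s_root] := real_quadratic_root p_ge0 m_gt0 k_real.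
set z := (s * w) *: x + y.
have Qz : ip (T z) z = c * ip z z.
  have swJ : (s * w)^* = s * w^* by rewrite rmorphM /= conj_Creal.
  apply/eqP; rewrite -subr_eq0; apply/eqP.
  have eP1 : ip (T x) y = bet * d + c * ip x y by rewrite divfK // subrK.
  have eP2 : ip (T y) x = gam * d + c * ip y x by rewrite divfK // subrK.
  rewrite linopZD // !ipZDl !ipDr !ipZr swJ xx1 yy1 -/a -/b eP1 eP2.
  transitivity
    (d * ((1 - t%:C%C) + (w * bet + w^* * gam) * s - t%:C%C * (w * w^*) * s ^+ 2)).
    by rewrite /c /d; ring.
  by rewrite s_root mulr0.
have z_neq0 : z != 0.
  apply: contra_neq ba => z0.
  have yE : y = (- (s * w)) *: x.
    by rewrite scaleNr; apply/eqP; rewrite -addr_eq0 addrC; apply/eqP.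
  have sw_norm1 : - (s * w) * (- (s * w))^* = 1.
    by move: yy1; rewrite yE ipZl ipZr xx1 mulr1.
  by rewrite /b yE linopZ // ipZl ipZr mulrA sw_norm1 mul1r.
have zz_neq0 : ip z z != 0 by apply: contra_neq z_neq0; apply: ip_eq0.
rewrite -(mulfK zz_neq0 c) -Qz; apply: numrange_ratio => //.
by case: sM => _; apply.
Qed.

Lemma We1_approx l lam eps : We1 ip dom T lam -> 0 < eps ->
  exists x, [/\ (orth ip (fspan l) `&` dom) x, ip x x = 1 & `|ip (T x) x - lam| < eps].
Proof.
move=> lam_We1 eps_gt0.
have := lam_We1 (fspan l) (ex_intro _ l erefl).
move=> /(_ _ (nbhsx_ballx (lam : R[i]^o) eps eps_gt0)).
by move=> [_ [[x [xl /hnorm_eq1 xx1] <-] lam_x]]; exists x; split; rewrite // distrC.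
Qed.

Lemma We1_interior_numrange l lam : (We1 ip dom T : set R[i]^o)^° lam ->
  numrange ip (orth ip (fspan l) `&` dom) T lam.
Proof.
move=> lam_int; apply: convexC_interior_closure.
  apply: numrange_convex; last by move=> ? [].
  exact/subspaceI/linop_dom_subspace/orth_subspace.
by apply: interiorS lam_int; apply: bigcap_inf; exists l.
Qed.

End Operator.

End InnerProduct.

Unset Implicit Arguments.

Theorem lemma6p6 (R : realType) (H : lmodType (complex R))
  (ip : H -> H -> complex R) (hH : sep_inf_Hilbert ip)
  (dom : set H) (T : H -> H) (hT : linop dom T)
  (V : set H) (hV : findim_subspace V) (hVdom : V `<=` dom)
  (lam eps : complex R) (hlam : We1 ip dom T lam) (heps : 0 < eps) :
  [/\ exists (x : H) (mu : complex R) (A : H -> H),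
        lemma6p6_choice ip dom T V lam eps x mu A,
      (dense_dom ip dom /\ dom `<=` adj_dom ip dom T ->
        exists (x : H) (mu : complex R),
          lemma6p6_choice ip dom T V lam eps x mu (fun _ => 0)) &
      ((We1 ip dom T : set (complex R)^o)^° lam ->
        exists (x : H) (A : H -> H),
          lemma6p6_choice ip dom T V lam eps x lam A)].
Proof.
case: hH => ipZDl ip_conj ip_ge0 ip_eq0 _ _ _; case: hV => s Vs; subst V.
have choice_orth := lemma6p6_choice_orth ipZDl ip_conj ip_eq0 hT hVdom.
split.
- have [x [[x_orth dx] xx1 mu_lam]] := We1_approx (s ++ map T s) hlam heps.
  exists x, (ip (T x) x), (fun h => ip h x *: Defs.proj ip (fspan s) (T x)).
  exact: choice_orth.
- case=> _ adj.
  have /boolp.choice [f f_adj] :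
      forall v, exists w, fspan s v -> forall u, dom u -> ip (T u) v = ip u w.
    move=> v; have [/hVdom/adj [w hw]|nVv] := pselect (fspan s v); first by exists w.
    by exists 0 => /nVv.
  have [x [[x_orth dx] xx1 mu_lam]] := We1_approx (s ++ map T s ++ map f s) hlam heps.
  have PTx0 : Defs.proj ip (fspan s) (T x) = 0.
    have sV := fspan_subspace s.
    apply: (projE ipZDl ip_eq0 sV); apply: is_proj_orth sV _.
    apply: (orth_fspan ipZDl ip_conj) => v sv; rewrite (f_adj v (fspan_mem sv) x dx).
    by apply: x_orth; apply: fspan_mem; rewrite !mem_cat map_f ?orbT.
  exists x, (ip (T x) x).
  have -> : (fun _ => 0) = fun h => ip h x *: Defs.proj ip (fspan s) (T x).
    by apply/funext => h; rewrite PTx0 scaler0.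
  apply: choice_orth => // v /(@fspan_catl _ _ _ (map f s)); rewrite -catA; exact: x_orth.
- move=> /(We1_interior_numrange ipZDl ip_conj ip_eq0 ip_ge0 hT (s ++ map T s)).
  move=> [x [[x_orth dx] /hnorm_eq1 xx1] <-].
  by eexists x, _; apply: choice_orth; rewrite ?subrr ?normr0.
Qed.
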